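(* Let $\mathcal{H}$ be a quantum system of dimension $d$ with orthonormal basis $\{|i\rangle\}_{i=1}^d$, and let $\sigma=\sum_{i=1}^d p_i|i\rangle\langle i|$ where $\{p_i\}$ is a probability distribution with $p_1\ge p_2\ge\cdots\ge p_d$. Let $\epsilon>0$, and let $\sigma^{(A)}$ and $\sigma^{(G)}$ be the approximate states of $\sigma$ obtained by the arithmetic mean method and the geometric mean method, respectively. Then $$\|\sigma^{(A)}-\sigma\|_1\le\epsilon,\qquad \|\sigma^{(G)}-\sigma\|_1\le\epsilon .$$
   Context: $\|\cdot\|_1$ is the trace norm. Arithmetic mean method: let $k_0=0$; for $i=1,2,\dots$ let $k_i$ be the largest integer ($\le d$) such that $|p_{k_{i-1}+1}-p_{k_i}|\le\epsilon/d$, and set $I_i=\{k_{i-1}+1,\dots,k_i\}$; stop at the index $L$ with $k_L=d$. For $j\in I_i$ set $p_j^{(A)}=\frac{1}{|I_i|}\sum_{m\in I_i}p_m$, and $\sigma^{(A)}=\sum_{j=1}^d p_j^{(A)}|j\rangle\langle j|$. Geometric mean method: identical except that $k_i$ is the largest integer ($\le d$) such that $p_{k_i}/p_{k_{i-1}+1}\ge 1/(1+\epsilon)$; the bins $I_i$ are defined likewise, $p_j^{(G)}=\frac{1}{|I_i|}\sum_{m\in I_i}p_m$ for $j\in I_i$, and $\sigma^{(G)}=\sum_{j} p_j^{(G)}|j\rangle\langle j|$. *)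

From HB Require Import structures.
From mathcomp Require Import all_boot all_order all_algebra.
Set Implicit Arguments. Unset Strict Implicit. Unset Printing Implicit Defensive.
Import Order.TTheory GRing.Theory Num.Theory.
Local Open Scope ring_scope.

(* Indices are 1-based as in the paper: the distribution is p 1, ..., p d
   (values of p outside 1..d are irrelevant). *)

Section Binning.
Variables (R : realFieldType) (d : nat) (p : nat -> R).

Definition next_k (c : R -> R -> bool) (k : nat) : nat :=
  if (k < d)%N then \max_(k.+1 <= m < d.+1 | c (p k.+1) (p m)) m else k.

Definition k_seq (c : R -> R -> bool) (i : nat) : nat := iter i (next_k c) 0%N.

(* averaged probability: p^(.)_j = mean of p over the bin I_i = {k_{i-1}+1..k_i}
   containing j.  The sum over i picks out the unique bin containing j
   (bins after the stopping index are empty). *)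
Definition binned (c : R -> R -> bool) (j : nat) : R :=
  \sum_(1 <= i < d.+1)
    if (k_seq c i.-1 < j <= k_seq c i)%N then
      (k_seq c i - k_seq c i.-1)%:R^-1 *
        \sum_((k_seq c i.-1).+1 <= m < (k_seq c i).+1) p m
    else 0.

End Binning.

Definition arith_crit (R : realFieldType) (d : nat) (eps : R) : R -> R -> bool :=
  fun a b => `|a - b| <= eps / d%:R.

(* geometric-mean criterion: p_{k_i} / p_{k_{i-1}+1} >= 1/(1+eps),
   written without division as (1+eps) p_{k_i} >= p_{k_{i-1}+1} *)
Definition geom_crit (R : realFieldType) (eps : R) : R -> R -> bool :=
  fun a b => a <= (1 + eps) * b.

Definition sigmaA (R : realFieldType) (d : nat) (eps : R) (p : nat -> R) : nat -> R :=
  binned d p (arith_crit d eps).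
Definition sigmaG (R : realFieldType) (d : nat) (eps : R) (p : nat -> R) : nat -> R :=
  binned d p (geom_crit eps).

Definition diag_state (R : realFieldType) (d : nat) (q : nat -> R) : 'M[R]_d :=
  diag_mx (\row_(i < d) q i.+1).

(* trace norm of a diagonal matrix: ||A||_1 = sum_i |A_ii|
   (singular values of a diagonal matrix are the |A_ii|) *)
Definition diag_trace_norm (R : realFieldType) (d : nat) (A : 'M[R]_d) : R :=
  \sum_(i < d) `|A i i|.

From HB Require Import structures.
From mathcomp Require Import all_boot all_order all_algebra.
From mathcomp Require Import zify lra.
Import Order.TTheory GRing.Theory Num.Theory.
Local Open Scope ring_scope.

Set Implicit Arguments.
Unset Strict Implicit.

(** The bins partition [1..d], and on a bin [(a, b]] both [p j] and the bin
    average lie between [p b] and [p (a+1)], so each entry moves by at most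
    [p (a+1) - p b].  The arithmetic criterion bounds this by [eps/d], summing
    to [eps] over the [d] entries; the geometric criterion bounds it by
    [eps * p b <= eps * p j], summing to [eps * sum_j p j = eps]. *)

Lemma bigmax_seq_mem (r : seq nat) (P : pred nat) :
  has P r -> (\max_(i <- r | P i) i \in r) && P (\max_(i <- r | P i) i).
Proof.
move=> /hasP[i0 ri0 Pi0]; set M := \max_(i <- r | P i) i.
have : (M == 0)%N || (M \in r) && P M.
  rewrite /M big_seq_cond.
  elim/big_ind: _ => [//| m n | i /andP[-> ->]]; last by rewrite orbT.
  by case: (leqP m n) => _ Qm Qn.
case/orP=> [/eqP max0 | //].
have := leq_bigmax_seq i0 ri0 Pi0 (F := id); rewrite -/M max0 leqn0 => /eqP i00.
by rewrite -i00 ri0.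
Qed.

Definition mean (R : realFieldType) (p : nat -> R) (a b : nat) : R :=
  (b - a)%:R^-1 * \sum_(a.+1 <= m < b.+1) p m.

Section Mean.
Variables (R : realFieldType) (p : nat -> R) (a b : nat).
Hypothesis ab : (a < b)%N.
Hypothesis p_noninc : forall m n, (a < m)%N -> (m <= n)%N -> (n <= b)%N -> p n <= p m.

Lemma mean_bounds : p b <= mean p a b <= p a.+1.
Proof.
have n_gt0 : 0 < (b - a)%:R :> R by rewrite ltr0n subn_gt0.
have n_eq : (b - a = b.+1 - a.+1)%N by [].
rewrite /mean mulrC ler_pdivlMr // ler_pdivrMr // !mulr_natr n_eq -!sumr_const_nat.
by apply/andP; split; apply: ler_sum_nat => m /andP[am mb]; apply: p_noninc; lia.
Qed.

Lemma dist_mean j : (a < j <= b)%N -> `|mean p a b - p j| <= p a.+1 - p b.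
Proof.
move=> /andP[aj jb]; have /andP[mb ma] := mean_bounds.
have jb' : p b <= p j by apply: p_noninc.
have ja : p j <= p a.+1 by apply: p_noninc.
rewrite ler_norml; apply/andP; split; lra.
Qed.

End Mean.

Section Binning.
Variables (R : realFieldType) (d : nat) (p : nat -> R) (c : R -> R -> bool).

Local Notation next := (next_k d p c).
Local Notation k := (k_seq d p c).

(* Makes the range of the [\max] defining [next_k] nonempty, so that it is not
   the junk value [0]. *)
Hypothesis c_refl : forall m, (m < d)%N -> c (p m.+1) (p m.+1).

Lemma next_k_spec m : (m < d)%N -> (m < next m <= d)%N && c (p m.+1) (p (next m)).
Proof.
move=> md; rewrite /next_k md.
have has_c : has (fun n => c (p m.+1) (p n)) (index_iota m.+1 d.+1).
  by apply/hasP; exists m.+1; [rewrite mem_index_iota; lia | exact: c_refl].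
by have /andP[] := bigmax_seq_mem has_c; rewrite mem_index_iota ltnS => /andP[-> ->] ->.
Qed.

Lemma next_k_stop m : (d <= m)%N -> next m = m.
Proof. by rewrite /next_k ltnNge => ->. Qed.

Lemma k_seqS i : k i.+1 = next (k i).
Proof. by []. Qed.

Lemma k_seq_le i : (k i <= d)%N.
Proof.
elim: i => [//| i IH]; rewrite k_seqS.
case: (ltnP (k i) d) => [/next_k_spec/andP[/andP[_ ->]] // | /next_k_stop ->//].
Qed.

Lemma k_seq_leS i : (k i <= k i.+1)%N.
Proof.
rewrite k_seqS; case: (ltnP (k i) d) => [/next_k_spec/andP[/andP[/ltnW ->]]//|].
by move=> /next_k_stop ->.
Qed.

Lemma k_seq_homo : {homo k : i j / (i <= j)%N}.
Proof. exact: homo_leq leqnn leq_trans k_seq_leS. Qed.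

Lemma k_seq_ge i : (minn i d <= k i)%N.
Proof.
elim: i => [|i IH]; first by rewrite min0n.
rewrite k_seqS.
case: (ltnP (k i) d) => [/next_k_spec/andP[/andP[lt_next _] _] | ge_kd]; first lia.
by rewrite next_k_stop //; lia.
Qed.

Lemma k_seq_d : k d = d.
Proof. by apply/eqP; rewrite eqn_leq k_seq_le; have := k_seq_ge d; rewrite minnn. Qed.

Lemma bin_exists j :
  (0 < j <= d)%N -> exists2 i, (0 < i <= d)%N & (k i.-1 < j <= k i)%N.
Proof.
move=> /andP[j_gt0 jd].
have ex_i : exists i, (j <= k i)%N by exists d; rewrite k_seq_d.
case: (ex_minnP ex_i) => i ji i_min.
have i_gt0 : (0 < i)%N by case: i ji {i_min} => //; rewrite leqNgt j_gt0.
exists i; last by rewrite ji andbT ltnNge; apply/negP => /i_min; lia.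
by rewrite i_gt0 i_min // k_seq_d.
Qed.

Lemma binned_bin i j : (0 < i <= d)%N -> (k i.-1 < j <= k i)%N ->
  binned d p c j = mean p (k i.-1) (k i).
Proof.
move=> /andP[i_gt0 id] ji; rewrite /binned (bigD1_seq i) ?iota_uniq //=; last first.
  by rewrite mem_index_iota; lia.
rewrite ji [X in _ + X]big1 ?addr0 // => i' /negPf ne; case: ifP => // /andP[lt_i' le_i'].
suff : i' = i by move/eqP; rewrite ne.
case: (ltngtP i' i) => // [lt | gt].
  by have := @k_seq_homo i' i.-1; lia.
by have := @k_seq_homo i i'.-1; lia.
Qed.

Lemma bin_crit i : (0 < i)%N -> (k i.-1 < d)%N ->
  (k i.-1 < k i)%N && c (p (k i.-1).+1) (p (k i)).
Proof.
by move=> i_gt0 /next_k_spec; rewrite -k_seqS prednK // => /andP[/andP[-> _] ->].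
Qed.

Hypothesis p_noninc : forall i j, (1 <= i)%N -> (i <= j)%N -> (j <= d)%N -> p j <= p i.

Lemma dist_binned j : (0 < j <= d)%N -> exists a b,
  [/\ (a < j <= b)%N, (b <= d)%N, c (p a.+1) (p b)
    & `|binned d p c j - p j| <= p a.+1 - p b].
Proof.
move=> jd; have [i i_range ji] := bin_exists jd; have /andP[i_gt0 _] := i_range.
have kd : (k i.-1 < d)%N by have := k_seq_le i; lia.
have /andP[lt_bin crit] := bin_crit i_gt0 kd.
exists (k i.-1), (k i); split => //; first exact: k_seq_le.
rewrite (binned_bin i_range ji); apply: dist_mean => // m n am mn nb.
by apply: p_noninc => //; [lia | exact: leq_trans nb (k_seq_le i)].
Qed.

End Binning.

Lemma diag_trace_norm_le (R : realFieldType) (d : nat) (p q f : nat -> R) :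
  (forall j, (0 < j <= d)%N -> `|q j - p j| <= f j) ->
  diag_trace_norm (diag_state d q - diag_state d p) <= \sum_(i < d) f i.+1.
Proof.
move=> le_qp; apply: ler_sum => i _.
by rewrite /diag_state !mxE eqxx !mulr1n; apply: le_qp; rewrite ltn_ord.
Qed.

Section Criteria.
Variables (R : realFieldType) (d : nat) (p : nat -> R) (eps : R).
Hypothesis eps_ge0 : 0 <= eps.
Hypothesis p_noninc : forall i j, (1 <= i)%N -> (i <= j)%N -> (j <= d)%N -> p j <= p i.

Lemma dist_sigmaA j : (0 < j <= d)%N -> `|sigmaA d eps p j - p j| <= eps / d%:R.
Proof.
have crit_refl m : (m < d)%N -> arith_crit d eps (p m.+1) (p m.+1).
  by rewrite /arith_crit subrr normr0 divr_ge0.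
move=> /(dist_binned crit_refl p_noninc)[a [b [_ _ crit le_dist]]].
exact: le_trans le_dist (le_trans (ler_norm _) crit).
Qed.

Hypothesis p_ge0 : forall i, (1 <= i <= d)%N -> 0 <= p i.

Lemma dist_sigmaG j : (0 < j <= d)%N -> `|sigmaG d eps p j - p j| <= eps * p j.
Proof.
have crit_refl m : (m < d)%N -> geom_crit eps (p m.+1) (p m.+1).
  by move=> md; rewrite /geom_crit mulrDl mul1r lerDl mulr_ge0 // p_ge0.
move=> /(dist_binned crit_refl p_noninc)[a [b [/andP[aj jb] bd crit le_dist]]].
have pb_le_pj : eps * p b <= eps * p j by apply/ler_wpM2l/p_noninc => //; lia.
rewrite /geom_crit mulrDl mul1r in crit; apply: le_trans le_dist _; lra.
Qed.

End Criteria.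

Unset Implicit Arguments.

Theorem proposition1 (R : realFieldType) (d : nat) (p : nat -> R) (eps : R) :
  (0 < d)%N ->
  (forall i, (1 <= i <= d)%N -> 0 <= p i) ->
  \sum_(1 <= i < d.+1) p i = 1 ->
  (forall i j, (1 <= i)%N -> (i <= j)%N -> (j <= d)%N -> p j <= p i) ->
  0 < eps ->
  diag_trace_norm (diag_state d (sigmaA d eps p) - diag_state d p) <= eps /\
  diag_trace_norm (diag_state d (sigmaG d eps p) - diag_state d p) <= eps.
Proof.
move=> d_gt0 p_ge0 p_sum1 p_noninc /ltW eps_ge0; split.
  apply: le_trans (diag_trace_norm_le (dist_sigmaA eps_ge0 p_noninc)) _.
  by rewrite sumr_const card_ord -[_ *+ d]mulr_natr divfK // pnatr_eq0 -lt0n.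
apply: le_trans (diag_trace_norm_le (dist_sigmaG eps_ge0 p_noninc p_ge0)) _.
have sum1 : \sum_(i < d) p i.+1 = 1 by rewrite -p_sum1 big_add1 /= big_mkord.
by rewrite -mulr_sumr sum1 mulr1.
Qed.
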